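(* Let $s,t,D\ge1$ be integers, let $\mathcal G=\{G_1,\dots,G_t\}$ be an $s$-joined graph family on $n$ vertices, and let $\mathcal H$ be a rooted $[t]$-edge-colored graph with $\Delta^{mon}(\mathcal H)\le D$ and $|V(\mathcal H)|\le n-2sD-3s$. Let $(w,r)\in V(\mathcal H)\times[t]$ with $\deg_{H_r}(w)<D$ and let $\mathcal H+wu$ be the extension of $\mathcal H$ with $w\overset{r}{\sim}u$. If $\phi:\mathcal H\hookrightarrow\mathcal G$ is a $(2s,D)$-good embedding, then there is a $(2s,D)$-good embedding $\phi':\mathcal H+wu\hookrightarrow\mathcal G$ extending $\phi$.
   Context: A graph family $\mathcal G=\{G_1,\dots,G_t\}$ is a collection of $t$ simple graphs on a common finite vertex set $V$, $n=|V|$. For $X\subseteq V\times[t]$, $\Gamma_{\mathcal G}(X)=\bigcup_{(v,i)\in X}\{u\in V:uv\in E(G_i)\}$. The family is $s$-joined if for all $X\subseteq V\times[t]$ and $Y\subseteq V$ with $|X|\ge s$ and $|Y|\ge s$ there exist $(v,i)\in X$ and $y\in Y$ with $vy\in E(G_i)$. A $[t]$-edge-colored graph $\mathcal H$ is a simple graph with each edge colored in $[t]$; $H_i$ is its spanning subgraph of color-$i$ edges, $\deg_{H_i}(h)$ the number of color-$i$ edges at $h$, and $\Delta^{mon}(\mathcal H)=\max_i\max_h\deg_{H_i}(h)$. An embedding $\phi:\mathcal H\hookrightarrow\mathcal G$ is an injective map $V(\mathcal H)\to V$ with $\phi(x)\phi(y)\in E(G_i)$ for every edge $xy$ of color $i$.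 A rooted $[t]$-edge-colored graph is one with a distinguished set of roots such that, after deleting all edges with both ends roots, every connected component is a tree containing exactly one root; for a non-root $h$ the unique path from $h$ to the root set (meeting it only at its last vertex) determines the parent of $h$ (its neighbour on the path) and $c(h)$, the color of the edge from $h$ to its parent. For fixed $D$: $P_\phi(\mathcal H)=\{(\phi(h),c(h)):h\text{ non-root}\}$ and, for $X\subseteq V\times[t]$, $R(X,\phi)=|\Gamma_{\mathcal G}(X)\setminus\phi(V(\mathcal H))|-\sum_{(v,i)\in X}[D-\deg_{H_i}(\phi^{-1}(v))]-|P_\phi(\mathcal H)\cap X|$, with $\deg_{H_i}(\phi^{-1}(v))=0$ if $v\notin\phi(V(\mathcal H))$. The embedding $\phi$ is $(s,D)$-good if $R(X,\phi)\ge0$ for every $X\subseteq V\times[t]$ with $|X|\le s$. For $w\in V(\mathcal H)$ and $r\in[t]$ with $\deg_{H_r}(w)<D$, the extension $\mathcal H+wu$ with $w\overset{r}{\sim}u$ is the rooted graph obtained by adding a new non-root vertex $u$ joined to $w$ by an edge of color $r$ (roots unchanged). An embedding extends $\phi$ if it agrees with $\phi$ on $V(\mathcal H)$. *)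

From HB Require Import structures.
From mathcomp Require Import all_boot all_order all_algebra.
From mathcomp Require Import boolp.
Set Implicit Arguments. Unset Strict Implicit. Unset Printing Implicit Defensive.
Import GRing.Theory Num.Theory.

(* A graph family {G_1,...,G_t} is G : 'I_t -> rel V ; simplicity (symmetric,
   irreflexive) is imposed as hypotheses in the theorem. *)

Definition simple_family (V : finType) (t : nat) (G : 'I_t -> rel V) : Prop :=
  forall i, symmetric (G i) /\ irreflexive (G i).

Definition Gamma (V : finType) (t : nat) (G : 'I_t -> rel V)
  (X : {set V * 'I_t}) : {set V} :=
  [set u | [exists x in X, G x.2 x.1 u]].

Definition s_joined (V : finType) (t : nat) (G : 'I_t -> rel V) (s : nat) : Prop :=
  forall (X : {set V * 'I_t}) (Y : {set V}), s <= #|X| -> s <= #|Y| ->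
    exists x, exists y, [/\ x \in X, y \in Y & G x.2 x.1 y].

(* col x y = Some i iff xy is an edge of colour i; None iff no edge. *)
Record cgraph (t : nat) (T : finType) := CGraph {
  col : T -> T -> option 'I_t;
  col_sym : forall x y, col x y = col y x;
  col_irr : forall x, col x x = None }.

Definition deg t (T : finType) (H : cgraph t T) (i : 'I_t) (h : T) : nat :=
  #|[set y | col H h y == Some i]|.

Definition maxmondeg_le t (T : finType) (H : cgraph t T) (D : nat) : Prop :=
  forall i h, deg H i h <= D.

Record rcgraph (t : nat) (T : finType) := RCGraph {
  rg :> cgraph t T;
  roots : {set T} }.

Definition redge t (T : finType) (H : rcgraph t T) : rel T :=
  fun x y => (col H x y != None) && ~~ ((x \in roots H) && (y \in roots H)).

Definition is_rooted t (T : finType) (H : rcgraph t T) : Prop :=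
  (forall c : seq T, ~ (ucycle (redge H) c /\ 2 < size c)) /\
  (forall h : T, #|[set r in roots H | connect (redge H) h r]| = 1).

Definition root_path t (T : finType) (H : rcgraph t T) (h : T) (p : seq T) : Prop :=
  [/\ path (redge H) h p, uniq (h :: p), p != [::],
      last h p \in roots H & all (fun y => y \notin roots H) (belast h p)].

Definition is_parent t (T : finType) (H : rcgraph t T) (h x : T) : bool :=
  `[< exists p, root_path H h (x :: p) >].

Definition embedding (V : finType) t (G : 'I_t -> rel V) (T : finType)
  (H : cgraph t T) (phi : T -> V) : Prop :=
  injective phi /\ forall x y i, col H x y = Some i -> G i (phi x) (phi y).

Definition Pphi (V : finType) t (T : finType) (H : rcgraph t T) (phi : T -> V)
  : {set V * 'I_t} :=
  [set z | [exists h, [exists x, [&& h \notin roots H, is_parent H h x,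
                                     phi h == z.1 & col H h x == Some z.2]]]].

(* deg_{H_i}(phi^{-1}(v)), and 0 if v is not in the image *)
Definition degpre (V : finType) t (T : finType) (H : cgraph t T) (phi : T -> V)
  (i : 'I_t) (v : V) : nat :=
  if [pick h | phi h == v] is Some h then deg H i h else 0.

Definition image_set (V : finType) (T : finType) (phi : T -> V) : {set V} :=
  [set phi h | h : T].

Definition Rval (V : finType) t (G : 'I_t -> rel V) (T : finType)
  (H : rcgraph t T) (phi : T -> V) (D : nat) (X : {set V * 'I_t}) : int :=
  (#|Gamma G X :\: image_set phi|%:Z
   - (\sum_(x in X) ((D%:Z) - (degpre H phi x.2 x.1)%:Z))
   - #|Pphi H phi :&: X|%:Z)%R.

Definition good (V : finType) t (G : 'I_t -> rel V) (T : finType)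
  (H : rcgraph t T) (phi : T -> V) (s D : nat) : Prop :=
  forall X : {set V * 'I_t}, #|X| <= s -> (0 <= Rval G H phi D X)%R.

(* vertices option T; the new vertex u is None *)
Definition ext_col t (T : finType) (H : cgraph t T) (w : T) (r : 'I_t)
  (x y : option T) : option 'I_t :=
  match x, y with
  | Some a, Some b => col H a b
  | None, Some b => if b == w then Some r else None
  | Some a, None => if a == w then Some r else None
  | None, None => None
  end.

Lemma ext_col_sym t (T : finType) (H : cgraph t T) w r x y :
  ext_col H w r x y = ext_col H w r y x.
Proof. by case: x; case: y => //= a b; rewrite col_sym. Qed.

Lemma ext_col_irr t (T : finType) (H : cgraph t T) w r x :
  ext_col H w r x x = None.
Proof. by case: x => //= a; rewrite col_irr. Qed.

Definition ext t (T : finType) (H : rcgraph t T) (w : T) (r : 'I_t)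
  : rcgraph t (option T) :=
  RCGraph (CGraph (@ext_col_sym t T H w r) (@ext_col_irr t T H w r))
         [set Some x | x in roots H].

(* Call X tight when |X| <= 2s and R(X) = 0.  Since G is s-joined and n is large,
   R(X) > 0 whenever s <= |X| <= 2s, so tight sets have fewer than s elements; by
   submodularity of R a union of two tight sets is again tight.  Hence there is a
   largest tight set Xm avoiding p = (phi w, r).  As deg_{H_r}(w) < D, goodness of
   p + Xm leaves a G_r-neighbour y of phi w outside the image of phi and outside
   Gamma(Xm).  Sending the new leaf u to y changes R(X) by at least
   [p \in X] - [y \in Gamma(X)], and a set X with y \in Gamma(X) and p \notin X is not
   tight, so R(X) >= 1 for it. *)

From Pilot Require Import Defs.
From mathcomp Require Import all_boot all_order all_algebra.
From mathcomp Require Import boolp zify lra.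
Set Implicit Arguments. Unset Strict Implicit. Unset Printing Implicit Defensive.
Import Order.TTheory GRing.Theory Num.Theory.

Section Neighbourhoods.
Variables (V : finType) (t : nat) (G : 'I_t -> rel V).

Lemma Gamma0 : Gamma G set0 = set0.
Proof. by apply/setP=> u; rewrite !inE; apply/existsP => -[x]; rewrite inE. Qed.

Lemma GammaU (X Y : {set V * 'I_t}) : Gamma G (X :|: Y) = Gamma G X :|: Gamma G Y.
Proof.
apply/setP=> u; rewrite !inE; apply/existsP/orP => [[x]|].
  by rewrite inE => /andP[/orP[] xX xu]; [left|right]; apply/existsP; exists x;
     rewrite xX.
by case=> /existsP[x /andP[xX xu]]; exists x; rewrite inE xX ?orbT.
Qed.

Lemma Gamma1 a : Gamma G [set a] = [set u | G a.2 a.1 u].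
Proof.
apply/setP=> u; rewrite !inE; apply/existsP/idP => [[x]|au].
  by rewrite inE => /andP[/eqP->].
by exists a; rewrite inE eqxx.
Qed.

Lemma GammaS (X Y : {set V * 'I_t}) : X \subset Y -> Gamma G X \subset Gamma G Y.
Proof. by move=> /setUidPr <-; rewrite GammaU subsetUl. Qed.

End Neighbourhoods.

Lemma sum_indicator (I : finType) (A : {set I}) (a : I) :
  (\sum_(x in A) (x == a)%:Z = (a \in A)%:Z)%R.
Proof.
case: (boolP (a \in A)) => aA.
  rewrite (bigD1 a) //= eqxx big1 ?addr0 // => x /andP[_ /negbTE->] //.
by rewrite big1 // => x xA; case: eqP xA => // ->; rewrite (negbTE aA).
Qed.

Lemma sum_setUI (I : finType) (f : I -> int) (X Y : {set I}) :
  (\sum_(x in X :|: Y) f x + \sum_(x in X :&: Y) f x =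
   \sum_(x in X) f x + \sum_(x in Y) f x)%R.
Proof.
rewrite !(big_mkcond (fun x => x \in _)) -!big_split /=; apply: eq_bigr => x _.
by rewrite !inE; case: (x \in X); case: (x \in Y); rewrite ?addr0 ?add0r.
Qed.

Section Surplus.
Variables (V : finType) (t : nat) (G : 'I_t -> rel V).
Variables (T : finType) (H : rcgraph t T) (phi : T -> V) (D : nat).
Local Notation R := (Rval G H phi D).

Lemma Rval0 : R set0 = 0%R.
Proof. by rewrite /Rval Gamma0 set0D big_set0 setI0 !cards0 !subr0. Qed.

Lemma Rval_submod (X Y : {set V * 'I_t}) :
  (R (X :|: Y) + R (X :&: Y) <= R X + R Y)%R.
Proof.
rewrite /Rval; set I := image_set phi; set P := Pphi H phi.
have hGamma : #|Gamma G (X :|: Y) :\: I| + #|Gamma G (X :&: Y) :\: I| <=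
              #|Gamma G X :\: I| + #|Gamma G Y :\: I|.
  rewrite GammaU setDUl -[#|Gamma G X :\: I| + _]cardsUI leq_add2l.
  by rewrite subset_leq_card // -setDIl setSD // subsetI !GammaS ?subsetIl ?subsetIr.
have hP : #|P :&: (X :|: Y)| + #|P :&: (X :&: Y)| = #|P :&: X| + #|P :&: Y|.
  by rewrite setIUr -[RHS]cardsUI setIACA setIid.
have /= := sum_setUI (fun x => D%:Z - (degpre H phi x.2 x.1)%:Z)%R X Y.
move: hGamma; rewrite -lez_nat !PoszD => hGamma.
move/eqP: hP; rewrite -eqz_nat !PoszD => /eqP hP.
lra.
Qed.

Lemma sum_deficit_le (X : {set V * 'I_t}) :
  (\sum_(x in X) (D%:Z - (degpre H phi x.2 x.1)%:Z) <= (#|X| * D)%:Z)%R.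
Proof.
apply: (@le_trans _ _ (\sum_(x in X) D%:Z)%R).
  by apply: ler_sum => x _; rewrite lerBlDr lerDl.
by rewrite sumr_const -mulr_natr natz -PoszM mulnC.
Qed.

Lemma Rval_gt0 (s : nat) (X : {set V * 'I_t}) :
  s_joined G s -> #|T| + 2 * s * D + 3 * s <= #|V| ->
  s <= #|X| <= 2 * s -> (0 < R X)%R.
Proof.
move=> sjG hV /andP[sX X2s].
have hcompl : #|~: Gamma G X| < s.
  rewrite ltnNge; apply/negP => /(sjG X _ sX)[x [y [xX /setCP yN xy]]].
  by apply: yN; rewrite inE; apply/existsP; exists x; rewrite xX.
have := cardsC (Gamma G X); have := cardsID (image_set phi) (Gamma G X).
have : #|Gamma G X :&: image_set phi| <= #|T|.
  exact: leq_trans (subset_leq_card (subsetIr _ _)) (leq_imset_card _ _).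
have := sum_deficit_le X.
have : #|Pphi H phi :&: X| <= #|X| by apply/subset_leq_card/subsetIr.
have : #|X| * D <= 2 * s * D by rewrite leq_mul2r X2s orbT.
rewrite /Rval; lia.
Qed.

End Surplus.

Lemma cards_option (T : finType) (P : pred (option T)) :
  #|[set z | P z]| = P None + #|[set x | P (Some x)]|.
Proof.
rewrite (cardsD1 None) inE; congr (_ + _).
have -> : [set z | P z] :\ None = Some @: [set x | P (Some x)].
  apply/setP => -[a|]; rewrite !inE; last by apply/esym/imsetP => -[].
  by rewrite mem_imset ?inE //; exact: Some_inj.
by rewrite card_imset //; exact: Some_inj.
Qed.

Lemma map_Some_pmap_id (T : eqType) (s : seq (option T)) :
  None \notin s -> map Some (pmap id s) = s.
Proof. by elim: s => //= -[a|] s IH; rewrite inE //= => /IH ->. Qed.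

Lemma redge_sym t (T : finType) (H : rcgraph t T) : symmetric (redge H).
Proof. by move=> x y; rewrite /redge col_sym [(x \in _) && _]andbC. Qed.

Section Extension.
Variables (t : nat) (T : finType) (H : rcgraph t T) (w : T) (r : 'I_t).
Local Notation Hu := (ext H w r).

Lemma deg_ext_Some i h : deg Hu i (Some h) = deg H i h + ((h == w) && (r == i)).
Proof.
rewrite /deg /= cards_option /= addnC; congr (_ + _).
by case: (h == w); rewrite //= inj_eq //; exact: Some_inj.
Qed.

Lemma deg_ext_None i : deg Hu i None = (r == i).
Proof.
rewrite /deg /= cards_option /= add0n.
case: (eqVneq r i) => [<-|ne];
  [apply: etrans _ (cards1 w) | apply: etrans _ (cards0 T)].
all: apply: eq_card => x; rewrite !inE.
all: case: (x == w); rewrite //= (inj_eq Some_inj) ?eqxx //.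
exact/negbTE.
Qed.

Lemma roots_ext_Some a : (Some a \in Defs.roots Hu) = (a \in Defs.roots H).
Proof. by rewrite /= mem_imset //; exact: Some_inj. Qed.

Lemma roots_ext_None : (None \in Defs.roots Hu) = false.
Proof. by apply/negbTE/imsetP => -[]. Qed.

Lemma redge_ext_Some a b : redge Hu (Some a) (Some b) = redge H a b.
Proof. by rewrite /redge !roots_ext_Some. Qed.

Lemma redge_ext_None_r x : redge Hu x None = (x == Some w).
Proof.
case: x => [a|]; rewrite /redge roots_ext_None andbF andbT //=.
by rewrite (inj_eq Some_inj); case: (a == w).
Qed.

Lemma redge_ext_None_l x : redge Hu None x = (x == Some w).
Proof. by rewrite redge_sym redge_ext_None_r. Qed.

(* The new leaf [None] is adjacent only to [Some w], so a simple path through it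
   would have to visit [Some w] twice; and it is not a root, so it cannot end there. *)
Lemma root_path_ext_None h q : root_path Hu (Some h) q -> None \notin q.
Proof.
case=> hq uq _ last_q _; apply/negP => Nq.
move: hq uq last_q; case/splitPr: Nq => q1 q2.
rewrite cat_path -cat_cons cat_uniq /= redge_ext_None_r => /and3P[_ /eqP lq1 hq2].
case: q2 hq2 => [_ _|b q2 /= /andP[]]; first by rewrite last_cat roots_ext_None.
rewrite redge_ext_None_l => /eqP -> _ /and3P[_ /norP[_ /norP[+ _]] _] _.
by rewrite -lq1 mem_last.
Qed.

Lemma root_path_ext_Some h q : root_path Hu (Some h) (map Some q) -> root_path H h q.
Proof.
case=> hq uq q0 last_q all_q; split.
- by move: hq; rewrite path_map (eq_path redge_ext_Some).
- by move: uq; rewrite -map_cons (map_inj_uniq Some_inj).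
- by case: q q0 {hq uq last_q all_q}.
- by move: last_q; rewrite last_map roots_ext_Some.
- move: all_q; rewrite belast_map all_map; apply: sub_all => a /=.
  by rewrite roots_ext_Some.
Qed.

Lemma Pphi_ext (V : finType) (phi : T -> V) (y : V) :
  Pphi Hu (oapp phi y) \subset (y, r) |: Pphi H phi.
Proof.
apply/subsetP => -[v i]; rewrite !inE /= => /existsP[[h|] /existsP[x]].
  case/and4P => hR /asboolP[p hp] /eqP <- col_hx; apply/orP; right.
  have /map_Some_pmap_id := root_path_ext_None hp.
  case: (pmap id _) => [|x0 p0] // [ex ep]; subst x p.
  apply/existsP; exists h; apply/existsP; exists x0; rewrite -roots_ext_Some hR eqxx.
  by rewrite col_hx /= andbT; apply/asboolP; exists p0; exact: root_path_ext_Some.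
case/and4P => _ _ /eqP <-; case: x => [b|] //=.
by case: (b == w) => // /eqP[->]; rewrite eqxx.
Qed.

End Extension.

Section Preimages.
Variables (V : finType) (t : nat) (T : finType) (H : cgraph t T) (phi : T -> V).

Lemma degpre_inj i h : injective phi -> degpre H phi i (phi h) = deg H i h.
Proof.
move=> inj_phi; rewrite /degpre; case: pickP => [h' /eqP /inj_phi -> //|].
by move/(_ h); rewrite eqxx.
Qed.

Lemma degpre_notin i v : v \notin image_set phi -> degpre H phi i v = 0.
Proof.
move=> vI; rewrite /degpre; case: pickP => // h /eqP phih.
by move: vI; rewrite -phih imset_f.
Qed.

Lemma image_set_oapp y : image_set (oapp phi y) = y |: image_set phi.
Proof.
apply/setP => v; rewrite !inE; apply/imsetP/orP.
  by case=> -[h|] _ ->; [right; exact: imset_f | left].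
by case=> [/eqP ->|/imsetP[h _ ->]]; [exists None | exists (Some h)].
Qed.

End Preimages.

Section ExtendedEmbedding.
Variables (V : finType) (t : nat) (G : 'I_t -> rel V).
Variables (T : finType) (H : rcgraph t T) (w : T) (r : 'I_t) (phi : T -> V) (y : V).
Hypotheses (inj_phi : injective phi) (y_fresh : y \notin image_set phi).
Local Notation Hu := (ext H w r).
Local Notation phi' := (oapp phi y).

Lemma phi_neq_fresh h : (phi h == y) = false.
Proof. by apply: contraNF y_fresh => /eqP <-; exact: imset_f. Qed.

Lemma oapp_inj : injective phi'.
Proof.
by case=> [a|] [b|] //= => [/inj_phi -> //|/eqP|/esym/eqP]; rewrite phi_neq_fresh.
Qed.

Lemma embedding_ext :
  simple_family G -> embedding G H phi -> G r (phi w) y -> embedding G Hu phi'.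
Proof.
move=> simG [_ edges] wy; split; first exact: oapp_inj.
case=> [a|] [b|] i //=; first exact: edges.
  by case: (eqVneq a w) => [-> [<-]|].
by case: (eqVneq b w) => [-> [<-]|] //; rewrite (simG r).1.
Qed.

Lemma degpre_ext i v :
  degpre Hu phi' i v = degpre H phi i v + ((v, i) == (phi w, r)) + ((v, i) == (y, r)).
Proof.
rewrite !xpair_eqE; case: (boolP (v \in image_set phi')).
  rewrite image_set_oapp in_setU1 => /orP[/eqP->|/imsetP[h _ ->]].
    rewrite (degpre_inj _ _ None oapp_inj) deg_ext_None degpre_notin //.
    by rewrite [y == _]eq_sym phi_neq_fresh eqxx (eq_sym i).
  rewrite (degpre_inj _ _ (Some h) oapp_inj) deg_ext_Some degpre_inj //.
  by rewrite (inj_eq inj_phi) phi_neq_fresh (eq_sym i) addn0.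
move=> vI; have := vI; rewrite image_set_oapp in_setU1 negb_or => /andP[vy vphi].
rewrite !degpre_notin // (negbTE vy) andFb addn0.
by case: eqP vphi => // ->; rewrite imset_f.
Qed.

Lemma card_Gamma_ext (X : {set V * 'I_t}) :
  #|Gamma G X :\: image_set phi| = (y \in Gamma G X) + #|Gamma G X :\: image_set phi'|.
Proof.
rewrite (cardsD1 y) in_setD (negbTE y_fresh) image_set_oapp setUC -setDDl.
by congr (_ + _).
Qed.

Lemma sum_deficit_ext (D : nat) (X : {set V * 'I_t}) :
  (\sum_(x in X) (D%:Z - (degpre Hu phi' x.2 x.1)%:Z) =
   \sum_(x in X) (D%:Z - (degpre H phi x.2 x.1)%:Z)
   - ((phi w, r) \in X)%:Z - ((y, r) \in X)%:Z)%R.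
Proof.
rewrite -!sum_indicator -!sumrB; apply: eq_bigr => -[v i] _ /=.
by rewrite degpre_ext !PoszD !opprD !addrA.
Qed.

Lemma card_Pphi_ext (X : {set V * 'I_t}) :
  #|Pphi Hu phi' :&: X| <= #|Pphi H phi :&: X| + ((y, r) \in X).
Proof.
apply: leq_trans (subset_leq_card (setSI X (Pphi_ext H w r phi y))) _.
rewrite setIUl; apply: leq_trans (leq_card_setU _ _) _; rewrite addnC leq_add2l.
case: (boolP ((y, r) \in X)) => [_|yrX].
  by apply: leq_trans (subset_leq_card (subsetIl _ X)) _; rewrite cards1.
rewrite leqn0 cards_eq0; apply/eqP/setP => z; rewrite !inE.
by case: eqP => // ->; exact: negbTE.
Qed.

Lemma Rval_ext (D : nat) (X : {set V * 'I_t}) :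
  (Rval G H phi D X + ((phi w, r) \in X)%:Z - (y \in Gamma G X)%:Z <=
   Rval G Hu phi' D X)%R.
Proof.
have := card_Pphi_ext X; rewrite -lez_nat PoszD => hP.
by rewrite /Rval sum_deficit_ext card_Gamma_ext PoszD; lra.
Qed.

End ExtendedEmbedding.

Section TightSets.
Variables (s : nat) (V : finType) (t : nat) (G : 'I_t -> rel V).
Variables (T : finType) (H : rcgraph t T) (phi : T -> V) (D : nat).
Hypotheses (sjG : s_joined G s) (card_V : #|T| + 2 * s * D + 3 * s <= #|V|).
Hypothesis good_phi : good G H phi (2 * s) D.
Local Notation R := (Rval G H phi D).

Definition tight (X : {set V * 'I_t}) := (#|X| <= 2 * s) && (R X == 0%R).

Lemma tight_small (X : {set V * 'I_t}) : tight X -> #|X| < s.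
Proof.
case/andP=> X2s /eqP RX0; rewrite ltnNge; apply/negP => sX.
by have := Rval_gt0 H phi sjG card_V (introT andP (conj sX X2s)); rewrite RX0 ltxx.
Qed.

Lemma tight0 : tight set0.
Proof. by rewrite /tight cards0 Rval0 eqxx. Qed.

Lemma tightU (X Y : {set V * 'I_t}) : tight X -> tight Y -> tight (X :|: Y).
Proof.
move=> tX tY; have /andP[_ /eqP RX0] := tX; have /andP[_ /eqP RY0] := tY.
have XYs : #|X :|: Y| <= 2 * s.
  have := tight_small tX; have := tight_small tY; have := cardsUI X Y; lia.
have XIs : #|X :&: Y| <= 2 * s.
  have := tight_small tX; have := subset_leq_card (subsetIl X Y); lia.
have := Rval_submod G H phi D X Y; have := good_phi XYs; have := good_phi XIs.
by rewrite /tight XYs RX0 RY0 /=; lra.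
Qed.

Lemma exists_max_tight (a : V * 'I_t) :
  exists2 Xm, tight Xm && (a \notin Xm) &
    forall X, tight X -> a \notin X -> X \subset Xm.
Proof.
have t0 : tight set0 && (a \notin set0) by rewrite tight0 inE.
have [Xm /andP[tXm aXm] Xm_max] :=
  @arg_maxnP _ set0 (fun X => tight X && (a \notin X)) (fun X => #|X|) t0.
exists Xm; first by rewrite tXm aXm.
move=> X tX aX; have /eqP -> : Xm == X :|: Xm.
  by rewrite eqEcard subsetUr; apply: Xm_max; rewrite tightU // inE negb_or aX.
exact: subsetUl.
Qed.

Lemma exists_fresh_neighbour (X : {set V * 'I_t}) (a : V * 'I_t) :
  tight X -> a \notin X -> degpre H phi a.2 a.1 < D ->
  exists y, [&& G a.2 a.1 y, y \notin image_set phi & y \notin Gamma G X].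
Proof.
move=> tX aX lt_deg_D; apply/existsP; apply: contraT.
rewrite negb_exists => /forallP noy.
have aXs : #|a |: X| <= 2 * s.
  by rewrite cardsU1 aX add1n (leq_trans (tight_small tX)) ?leq_pmull.
have hGamma : #|Gamma G (a |: X) :\: image_set phi| <= #|Gamma G X :\: image_set phi|.
  apply/subset_leq_card/subsetP => u.
  rewrite GammaU Gamma1 !inE => /andP[uI /orP[au|uX]]; last by rewrite uI uX.
  by move: (noy u); rewrite au uI /= negbK inE => ->.
have hP : #|Pphi H phi :&: X| <= #|Pphi H phi :&: (a |: X)|.
  by apply/subset_leq_card/setIS/subsetUr.
move: lt_deg_D hGamma hP; rewrite -!(ltz_nat, lez_nat) => lt_deg_D hGamma hP.
have := good_phi aXs; have /andP[_ /eqP] := tX.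
rewrite /Rval big_setU1 //= => RX0 Ra0; lra.
Qed.

End TightSets.

Lemma good_ext (s : nat) (V : finType) (t : nat) (G : 'I_t -> rel V)
  (T : finType) (H : rcgraph t T) (w : T) (r : 'I_t) (phi : T -> V) (D : nat)
  (y : V) (Xm : {set V * 'I_t}) :
  good G H phi (2 * s) D -> injective phi -> y \notin image_set phi ->
  (forall X, tight s G H phi D X -> (phi w, r) \notin X -> X \subset Xm) ->
  y \notin Gamma G Xm -> good G (ext H w r) (oapp phi y) (2 * s) D.
Proof.
move=> good_phi inj_phi y_fresh Xm_max yXm X X2s.
have := Rval_ext G H w r inj_phi y_fresh D X; have := good_phi _ X2s.
case: (boolP (y \in Gamma G X)) => yX; case: (boolP ((phi w, r) \in X)) => pX /=;
  try lia.
have : Rval G H phi D X != 0%R.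
  apply: contra yXm => RX0; apply: subsetP (GammaS G (Xm_max X _ pX)) _ yX.
  by rewrite /tight X2s RX0.
lia.
Qed.

Theorem lemma2p8 (s t D : nat) (V : finType) (G : 'I_t -> rel V)
  (T : finType) (H : rcgraph t T) (w : T) (r : 'I_t) (phi : T -> V) :
  1 <= s -> 1 <= t -> 1 <= D ->
  simple_family G -> s_joined G s ->
  is_rooted H -> maxmondeg_le H D ->
  #|T| + 2 * s * D + 3 * s <= #|V| ->
  deg H r w < D ->
  embedding G H phi -> good G H phi (2 * s) D ->
  exists phi' : option T -> V,
    [/\ embedding G (ext H w r) phi',
        (forall x, phi' (Some x) = phi x) &
        good G (ext H w r) phi' (2 * s) D].
Proof.
move=> _ _ _ simG sjG _ _ card_V deg_w emb_phi good_phi.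
have inj_phi := emb_phi.1.
have [Xm /andP[tXm pXm] Xm_max] := exists_max_tight sjG card_V good_phi (phi w, r).
have [|y /and3P[wy y_fresh yXm]] := exists_fresh_neighbour sjG card_V good_phi tXm pXm.
  by rewrite degpre_inj.
exists (oapp phi y); split => //; first exact: embedding_ext.
exact: (good_ext good_phi inj_phi y_fresh Xm_max yXm).
Qed.
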